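(* Let $\{X_1,X_2,\dots\}$ be a random dense countable subset of $(0,1)$ satisfying the independence condition and such that for every Borel set $B\subset(0,1)$ of positive Lebesgue measure, $B\cap\{X_1,X_2,\dots\}\ne\emptyset$ a.s. Then for every Borel set $B\subset(0,1)$ of positive Lebesgue measure, $\Pr\big(\{X_2,X_3,\dots\}\cap B\ne\emptyset \,\big|\, X_1\big)=1$ almost surely.
   Context: A random countable subset of $(0,1)$ is given by random variables $X_1,X_2,\dots:\Omega\to(0,1)$ on a probability space, the set being $\omega\mapsto\{X_1(\omega),X_2(\omega),\dots\}$. It is dense if this set is dense in $(0,1)$ for a.e. $\omega$. Two random countable sets $\{X_k\},\{Y_k\}$ are identically distributed if some probability measure on $(0,1)^\infty\times(0,1)^\infty$ has marginals the laws of $(X_k)_k$ and $(Y_k)_k$ and is concentrated on pairs $(x,y)$ with $\{x_1,x_2,\dots\}=\{y_1,y_2,\dots\}$. Independence condition. For every $n\ge2$ and every $0=a_0<\dots<a_n=1$ there exist random variables $Y_{i,j}$ ($i\le n$, $j\ge1$) on some probability space such that: - $\{Y_{i,j}\}$ is distributed like $\{X_k\}$; - $Y_{i,j}\in[a_{i-1},a_i)$ a.s.; - the sequences $(Y_{i,j})_j$ are independent. *)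

From HB Require Import structures.
From mathcomp Require Import all_boot all_order all_algebra.
From mathcomp Require Import all_classical all_reals all_analysis.

Set Implicit Arguments.
Unset Strict Implicit.
Unset Printing Implicit Defensive.

Import Order.TTheory GRing.Theory Num.Theory.
Import numFieldNormedType.Exports.

Local Open Scope classical_set_scope.
Local Open Scope ring_scope.

Definition seq_gen (R : realType) : set (set (nat -> R)) :=
  \bigcup_(k in [set: nat])
    preimage_set_system setT (fun x : nat -> R => x k) measurable.

Definition Rseq (R : realType) := g_sigma_algebraType (@seq_gen R).

Definition rseq (R : realType) (T : Type) (X : nat -> T -> R) : T -> Rseq R :=
  fun w k => X k w.

(* Two random countable sets {X_k} (on (T1,P1)) and {Y_k} (on (T2,P2)) are
   identically distributed: some probability measure on R^N x R^N has
   marginals the laws of (X_k)_k and (Y_k)_k and is concentrated on pairs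
   (x,y) with {x_1,x_2,...} = {y_1,y_2,...}. *)
Definition same_set_law (R : realType)
    (d1 : measure_display) (T1 : measurableType d1) (P1 : probability T1 R)
    (X : nat -> T1 -> R)
    (d2 : measure_display) (T2 : measurableType d2) (P2 : probability T2 R)
    (Y : nat -> T2 -> R) : Prop :=
  exists mu : probability (Rseq R * Rseq R)%type R,
    [/\ (forall A : set (Rseq R), measurable A ->
           mu (fst @^-1` A) = P1 (rseq X @^-1` A)),
        (forall A : set (Rseq R), measurable A ->
           mu (snd @^-1` A) = P2 (rseq Y @^-1` A)) &
        {ae mu, forall xy : Rseq R * Rseq R,
           range (xy.1 : nat -> R) = range (xy.2 : nat -> R)}].

Definition indep_seqs (R : realType) (d : measure_display)
    (T : measurableType d) (P : probability T R) (n : nat)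
    (Y : 'I_n -> nat -> T -> R) : Prop :=
  forall A : 'I_n -> set (Rseq R), (forall i, measurable (A i)) ->
    P (\bigcap_(i in [set: 'I_n]) (rseq (Y i) @^-1` A i)) =
    (\prod_(i < n) P (rseq (Y i) @^-1` A i))%E.

(* The independence condition (indices shifted to start at 0):
   for n >= 2 and 0 = a_0 < ... < a_n = 1 there are random variables
   Y i j (i < n, j in N; values of Y for i >= n are irrelevant) on some probability space, with {Y i j} distributed
   like {X_k} (enumerated as k |-> Y (k mod n) (k div n)),
   Y i j in [a_i, a_(i+1)) a.s., and the sequences (Y i j)_j independent. *)
Definition independence_condition (R : realType) (d : measure_display)
    (T : measurableType d) (P : probability T R) (X : nat -> T -> R) : Prop :=
  forall (n : nat) (a : nat -> R), (2 <= n)%N -> a 0%N = 0 -> a n = 1 ->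
    (forall i, (i < n)%N -> a i < a i.+1) ->
    exists (d' : measure_display) (T' : measurableType d')
           (P' : probability T' R) (Y : nat -> nat -> T' -> R),
      [/\ (forall i j, (i < n)%N -> measurable_fun setT (Y i j)),
          same_set_law P' (fun k => Y (k %% n)%N (k %/ n)%N) P X,
          (forall i j, (i < n)%N -> {ae P', forall w, a i <= Y i j w < a i.+1}) &
          indep_seqs P' (fun i : 'I_n => Y (nat_of_ord i))].

Definition cond_prob_version (R : realType) (d : measure_display)
    (T : measurableType d) (P : probability T R) (X1 : T -> R) (E : set T)
    (h : R -> R) : Prop :=
  [/\ measurable_fun setT h,
      P.-integrable setT (EFin \o (h \o X1)) &
      forall A : set R, measurable A ->
        (\int[P]_(w in X1 @^-1` A) (h (X1 w))%:E = P (E `&` X1 @^-1` A))%E].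

(* Cut B at a point a so that B1 = B `&` ]-oo, a[ and B2 = B `&` [a, +oo[ both
   have positive Lebesgue measure.  Almost surely the random set meets both B1
   and B2, while X_1 lies in at most one of them; hence almost surely some X_k
   with k >= 2 lies in B, i.e. the conditioning event E is almost sure.  A
   version h(X_1) of P(E | X_1) then satisfies E[h(X_1); X_1 in A] = P(X_1 in A)
   for every Borel A, and taking A = {h > 1} and A = {h < 1} forces h(X_1) = 1
   almost surely. *)

From HB Require Import structures.
From mathcomp Require Import all_boot all_order all_algebra.
From mathcomp Require Import all_classical all_reals all_analysis.
From mathcomp Require Import measurable_realfun.

Set Implicit Arguments.
Unset Strict Implicit.
Unset Printing Implicit Defensive.

Import Order.TTheory GRing.Theory Num.Theory.
Import numFieldNormedType.Exports.

Local Open Scope classical_set_scope.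
Local Open Scope ring_scope.

Section lebesgue_measure_split.
Context {R : realType}.
Local Notation lambda := (@lebesgue_measure R).

Lemma lebesgue_measure_le_of_null_tails (B : set R) (x y : R) :
  measurable B -> x < y ->
  lambda (B `&` `]-oo, x[) = 0%E -> lambda (B `&` `[y, +oo[) = 0%E ->
  (lambda B <= (y - x)%:E)%E.
Proof.
move=> mB xy left0 right0.
have mBlt (a : R) : measurable (B `&` `]-oo, a[) by exact: measurableI.
have -> : lambda B = lambda (B `&` `]-oo, y[).
  rewrite (measureDI lambda mB (measurable_itv `]-oo, y[)) setDE setCitvl.
  by rewrite -[X in (X + _)%E]/(lambda (B `&` `[y, +oo[)) right0 add0e.
have -> : (y - x)%:E = (lambda (B `&` `]-oo, x[) + lambda `[x, y[)%E.
  by rewrite left0 add0e lebesgue_measure_itv/= lte_fin xy -EFinD.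
apply: (le_trans _ (measureU2 lambda (mBlt x) (measurable_itv `[x, y[))).
apply: le_measure; rewrite ?inE; [exact: mBlt|apply: measurableU => //; exact: mBlt|].
move=> z [Bz]; rewrite /= !in_itv /= => zy.
by case: (ltP z x) => xz; [left|right; apply/andP].
Qed.

Lemma lebesgue_measure_split (B : set R) (c : R) :
  measurable B -> B `<=` `[c, +oo[ -> (0 < lambda B)%E ->
  exists a, (0 < lambda (B `&` `]-oo, a[))%E /\ (0 < lambda (B `&` `[a, +oo[))%E.
Proof.
move=> mB Bc B_gt0.
have [e e_gt0 eB] : exists2 e : R, 0 < e & (e%:E < lambda B)%E.
  move: B_gt0; case: (lambda B) => [r r_gt0|_|]; last by rewrite ltNge leNye.
    exists (r / 2); first by rewrite divr_gt0.
    by rewrite lte_fin ltr_pdivrMr // ltr_pMr // ltr1n.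
  by exists 1; rewrite ?ltr01 ?ltry.
pose G n := lambda (B `&` `]-oo, c + n%:R * e[).
have G0 : G 0%N = 0%E.
  rewrite /G mul0r addr0 (_ : _ `&` _ = set0) ?measure0//.
  by apply/seteqP; split => x // [/Bc]; rewrite /= !in_itv/= andbT => /le_gtF ->.
have exG : exists n, G n != 0%E.
  apply/not_existsP => G_eq0.
  have U_null : lambda.-negligible (\bigcup_n (B `&` `]-oo, c + n%:R * e[)).
    apply: negligible_bigcup => n; apply/negligibleP; first exact: measurableI.
    by apply/eqP/negPn/negP; exact: G_eq0.
  move: B_gt0; rewrite lt0e => /andP[/eqP + _]; apply.
  apply/negligibleP => //; apply: negligibleS U_null.
  move=> x Bx; exists (Num.truncn ((x - c) / e)).+1 => //; split => //=.
  by rewrite in_itv/= -ltrBlDl -ltr_pdivrMr // truncnS_gt.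
case: (ex_minnP exG) => -[|m]; first by rewrite G0 eqxx.
move=> Gm_neq0 Gmin.
have Gm : G m = 0%E by apply/eqP/negPn/negP => /Gmin; rewrite ltnn.
(* a is the first grid point with mass of B to its left; without mass to its
   right, B would essentially lie in [a - e, a[, of measure e < lambda B. *)
set a := c + m.+1%:R * e.
exists a; split; first by rewrite lt0e Gm_neq0 measure_ge0.
rewrite lt0e measure_ge0 andbT; apply/eqP => right0.
have a_e : c + m%:R * e = a - e by rewrite /a -natr1 mulrDl mul1r addrA addrK.
suff : (lambda B <= (a - (a - e))%:E)%E by rewrite subKr leNgt eB.
apply: lebesgue_measure_le_of_null_tails right0 => //; first by rewrite ltrBlDr ltrDl.
by rewrite -a_e.
Qed.
End lebesgue_measure_split.

Section measure_lemmas.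
Context d (T : measurableType d) (R : realType).

Lemma ae_measureI (mu : {measure set T -> \bar R}) (E S : set T) :
  measurable E -> measurable S -> {ae mu, forall w, E w} -> mu (E `&` S) = mu S.
Proof.
move=> mE mS aeE.
have /negligibleP SE0 : mu.-negligible (S `\` E) by apply: negligibleS aeE => w [].
rewrite [RHS](measureDI mu mS mE) SE0 ?add0e 1?setIC //; exact: measurableD.
Qed.

Lemma gt0_integral_eq0_null (mu : {measure set T -> \bar R}) (S : set T) (g : T -> R) :
  measurable S -> measurable_fun S g -> (forall w, S w -> 0 < g w) ->
  (\int[mu]_(w in S) (g w)%:E = 0)%E -> mu S = 0%E.
Proof.
move=> mS mg g_gt0 int0.
have : (\int[mu]_(w in S) `|(g w)%:E| = 0)%E.
  rewrite -int0; apply: eq_integral => w /[!inE] Sw.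
  by rewrite gee0_abs // lee_fin ltW // g_gt0.
have mEg : measurable_fun S (EFin \o g : T -> \bar R) by exact/measurable_EFinP.
move=> /(ae_eq_integral_abs mu mS mEg) g_ae0.
apply/negligibleP => //; apply: negligibleS g_ae0 => w Sw /(_ Sw) [] /eqP.
by rewrite gt_eqF ?g_gt0.
Qed.

Section integral_eq_measure.
Variables (mu : {finite_measure set T -> \bar R}) (S : set T) (f : T -> R).
Hypotheses (mS : measurable S) (mf : measurable_fun S f)
  (f_int : mu.-integrable S (EFin \o f))
  (f_mu : (\int[mu]_(w in S) (f w)%:E = mu S)%E).

Let one_int : mu.-integrable S (EFin \o cst 1) := finite_measure_integrable_cst mu 1 mS.

Let int_one : (\int[mu]_(w in S) (cst 1 w)%:E = mu S)%E.
Proof. by rewrite -[RHS]mul1e -integral_cst. Qed.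

Lemma integral_eq_measure_gt1_null : (forall w, S w -> 1 < f w) -> mu S = 0%E.
Proof.
move=> f_gt1; apply: (@gt0_integral_eq0_null mu S (fun w => f w - 1)) => //.
- exact: measurable_funB.
- by move=> w Sw; rewrite subr_gt0 f_gt1.
- by rewrite (integralB_EFin mS f_int one_int) f_mu int_one subee ?fin_num_measure.
Qed.

Lemma integral_eq_measure_lt1_null : (forall w, S w -> f w < 1) -> mu S = 0%E.
Proof.
move=> f_lt1; apply: (@gt0_integral_eq0_null mu S (fun w => 1 - f w)) => //.
- exact: measurable_funB.
- by move=> w Sw; rewrite subr_gt0 f_lt1.
- by rewrite (integralB_EFin mS one_int f_int) f_mu int_one subee ?fin_num_measure.
Qed.

End integral_eq_measure.

End measure_lemmas.

Lemma cond_prob_version_ae_eq1 d (T : measurableType d) (R : realType)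
    (P : probability T R) (X : T -> R) (E : set T) (h : R -> R) :
  measurable_fun setT X -> measurable E -> {ae P, forall w, E w} ->
  cond_prob_version P X E h -> {ae P, forall w, h (X w) = 1}.
Proof.
move=> mX mE aeE [mh hX_int hX_E].
pose level A := X @^-1` (h @^-1` A).
have level_hyps A : measurable A -> [/\ measurable (level A),
    measurable_fun (level A) (h \o X),
    P.-integrable (level A) (EFin \o (h \o X)) &
    (\int[P]_(w in level A) (h (X w))%:E = P (level A))%E].
  move=> mA; have mhA : measurable (h @^-1` A) by rewrite -[X in measurable X]setTI; exact: mh.
  have mlA : measurable (level A) by rewrite -[X in measurable X]setTI; exact: mX.
  split => //; first exact: measurable_funS (measurableT_comp mh mX).
    exact: integrableS hX_int.
  by rewrite hX_E // ae_measureI.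
have U0 : P.-negligible (level `]1, +oo[%classic).
  have [mU mhU intU hU] := level_hyps _ (measurable_itv `]1, +oo[).
  apply/negligibleP => //; apply: integral_eq_measure_gt1_null mU mhU intU hU _.
  by move=> w; rewrite /level/= in_itv/= andbT.
have L0 : P.-negligible (level `]-oo, 1[%classic).
  have [mL mhL intL hL] := level_hyps _ (measurable_itv `]-oo, 1[).
  apply/negligibleP => //; apply: integral_eq_measure_lt1_null mL mhL intL hL _.
  by move=> w; rewrite /level/= in_itv.
apply: negligibleS (negligibleU U0 L0) => w; rewrite /level/= !in_itv/= andbT => hXw.
by case: (ltgtP (h (X w)) 1) => // hXw1; [right|left].
Qed.

(* X k is X_{k+1} of the paper; X 0 = X_1. *)
Theorem lemma5p7 (R : realType) (d : measure_display) (T : measurableType d)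
    (P : probability T R) (X : nat -> T -> R)
    (X_meas : forall k, measurable_fun setT (X k))
    (X_01 : forall k w, 0 < X k w < 1)
    (X_dense : {ae P, forall w, `]0, 1[%classic `<=` closure (range (X ^~ w))})
    (X_indep : independence_condition P X)
    (X_hit : forall B : set R, measurable B -> B `<=` `]0, 1[%classic ->
        (0 < lebesgue_measure B)%E ->
        {ae P, forall w, exists k, B (X k w)}) :
  forall B : set R, measurable B -> B `<=` `]0, 1[%classic ->
    (0 < lebesgue_measure B)%E ->
    forall h : R -> R,
      cond_prob_version P (X 0%N) [set w | exists2 k, (1 <= k)%N & B (X k w)] h ->
      {ae P, forall w, h (X 0%N w) = 1}.
Proof.
move=> B mB B01 B_gt0 h hE.
have B_ge0 : B `<=` `[0, +oo[ by move=> x /B01; rewrite /= !in_itv/= => /andP[/ltW ->].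
have [a [Bl_gt0 Br_gt0]] := lebesgue_measure_split mB B_ge0 B_gt0.
have hit (I : set R) : measurable I -> (0 < lebesgue_measure (B `&` I))%E ->
    {ae P, forall w, exists k, (B `&` I) (X k w)}.
  by move=> mI; apply: X_hit; [exact: measurableI|exact: subset_trans B01].
have mE : measurable [set w | exists2 k, (1 <= k)%N & B (X k w)].
  rewrite (_ : [set w | _] = \bigcup_k (X k.+1 @^-1` B)).
    by apply: bigcupT_measurable => k; rewrite -[X in measurable X]setTI; exact: X_meas.
  apply/seteqP; split => w /=; first by case=> -[|k] // _; exists k.
  by case=> k _; exists k.+1.
apply: cond_prob_version_ae_eq1 (X_meas 0%N) mE _ hE.
apply: filterS2 (hit _ (measurable_itv _) Bl_gt0) (hit _ (measurable_itv _) Br_gt0).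
move=> w [[|k] [Bk k_lt]]; last by exists k.+1.
move=> [[|l] [Bl l_ge]]; last by exists l.+1.
by move: k_lt l_ge; rewrite /= !in_itv/= andbT => /lt_le_trans/[apply]; rewrite ltxx.
Qed.
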